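(* Let $\theta_\ast>0$ and $\sigma>0$. There exists a constant $C(\theta_\ast,\sigma^2)>0$ such that for every $1$-Lipschitz function $\ell:\mathbb R\to\mathbb R$ with $\ell(0)=0$ and every integer $k\ge1$, there exists a polynomial $P_{k-1}(\theta)=\sum_{x=0}^{k-1}c_x\theta^x$ whose coefficients satisfy $$|c_x|\le\frac{C(\theta_\ast,\sigma^2)(x+1)^{1/2}2^x\big(1+(x/(e\sigma^2))^{x/2}\big)}{x!},\qquad 0\le x\le k-1,$$ and such that $$\sup_{\theta\in[0,\theta_\ast]}\big|\ell_\sigma(\theta)-\ell_\sigma(0)-e^{-\theta}P_{k-1}(\theta)\big|\le\frac{C(\theta_\ast,\sigma^2)(k+1)^{1/2}(2\theta_\ast)^k\big(1+(k/(e\sigma^2))^{k/2}\big)}{k!}.$$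
   Context: $\varphi_\sigma$ is the density of $\mathcal N(0,\sigma^2)$ and $\ell_\sigma=\ell\ast\varphi_\sigma$, i.e. $\ell_\sigma(\theta)=\int_{\mathbb R}\ell(\theta-y)\varphi_\sigma(y)\,\mathrm dy$. The convention $0^0=1$ is used. *)

From Stdlib Require Import Reals.
From Coquelicot Require Import Coquelicot.
Open Scope R_scope.

Definition gauss_density (sigma y : R) : R :=
  exp (- (y ^ 2) / (2 * sigma ^ 2)) / (sqrt (2 * PI) * sigma).

Definition smoothed_loss (l : R -> R) (sigma theta : R) : R :=
  RInt_gen (fun y => l (theta - y) * gauss_density sigma y)
           (Rbar_locally m_infty) (Rbar_locally p_infty).

Definition one_lipschitz (l : R -> R) : Prop :=
  forall x y : R, Rabs (l x - l y) <= Rabs (x - y).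

(* (n / (e sigma^2))^(n/2) with the convention 0^0 = 1 *)
Definition pw_term (n : nat) (sigma : R) : R :=
  match n with
  | O => 1
  | _ => Rpower (INR n / (exp 1 * sigma ^ 2)) (INR n / 2)
  end.

(** The substitution [u = theta - y] gives [l_sigma(theta) = int l(u) phi(theta - u) du], and
    [phi(theta - u) = e^(-theta) phi(u) e^(alpha(u) theta - theta^2 / (2 sigma^2))] with
    [alpha(u) = 1 + u / sigma^2].  Hence [l_sigma(theta) - l_sigma(0)] is [e^(-theta)] times
    the integral of [l(u) phi(u) F_u(theta)], where
    [F_u(theta) = e^(alpha(u) theta - theta^2 / (2 sigma^2)) - e^theta] is entire in [theta];
    [c_x] is the integral of [l phi] against the [x]-th Taylor coefficient of [F_u].
    Comparing with the series of [e^(|alpha(u)| r + r^2 / (2 sigma^2)) + e^r], which has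
    nonnegative coefficients, bounds the [x]-th coefficient by that value over [r^x] and the
    remainder after degree [k - 1] by [(theta / r)^k] times it.  Since [|l(u)| <= |u|], the
    Gaussian factor [phi(u)] absorbs the growth [e^(|u| r / sigma^2)] at the price of
    [e^(r^2 / (2 sigma^2))], so all integrands are [O(1 / (1 + u^2))], with a constant of order
    [(1 + r)^3 e^(r + r^2 / sigma^2) / r^x].  The radius [r = sigma sqrt(x / 2) + theta_star]
    and the bound [x! <= e x (x / e)^x] turn this into the stated estimates. *)

From Stdlib Require Import Reals Lra Lia Factorial.
From Coquelicot Require Import Coquelicot.
Open Scope R_scope.

Notation is_RInt_line f l :=
  (is_RInt_gen f (Rbar_locally m_infty) (Rbar_locally p_infty) l).

Lemma filterlim_atan_p_infty :
  filterlim atan (Rbar_locally p_infty) (locally (PI / 2)).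
Proof.
  apply filterlim_locally. intros eps.
  assert (Hc : continuous atan 0).
  { apply continuity_pt_filterlim, derivable_continuous_pt, derivable_pt_atan. }
  destruct (proj1 (filterlim_locally (F := locally 0) atan (atan 0)) Hc eps) as [d Hd].
  exists (/ d). intros x Hx.
  assert (Hx0 : 0 < x) by (generalize (Rinv_0_lt_compat d (cond_pos d)); lra).
  assert (Hinv : ball 0 d (/ x)).
  { change (Rabs (/ x - 0) < d). rewrite Rminus_0_r, Rabs_right
      by (left; apply Rinv_0_lt_compat; lra).
    rewrite <- (Rinv_inv d). apply Rinv_lt_contravar; [|exact Hx].
    apply Rmult_lt_0_compat; [apply Rinv_0_lt_compat, cond_pos | lra]. }
  specialize (Hd _ Hinv). rewrite atan_0, atan_inv in Hd by exact Hx0.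
  change (Rabs (PI / 2 - atan x - 0) < eps) in Hd.
  change (Rabs (atan x - PI / 2) < eps).
  rewrite <- Rabs_Ropp. replace (- (atan x - PI / 2)) with (PI / 2 - atan x - 0) by ring.
  exact Hd.
Qed.

Lemma filterlim_atan_m_infty :
  filterlim atan (Rbar_locally m_infty) (locally (- (PI / 2))).
Proof.
  apply filterlim_locally. intros eps.
  destruct (proj1 (filterlim_locally _ _) filterlim_atan_p_infty eps) as [M HM].
  exists (- M). intros x Hx. specialize (HM (- x) ltac:(lra)).
  rewrite atan_opp in HM. change (Rabs (- atan x - PI / 2) < eps) in HM.
  change (Rabs (atan x - - (PI / 2)) < eps).
  rewrite <- Rabs_Ropp. replace (- (atan x - - (PI / 2))) with (- atan x - PI / 2) by ring.
  exact HM.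
Qed.

Lemma continuous_inv_1_plus_sq (x : R) : continuous (fun t => / (1 + t ^ 2)) x.
Proof.
  apply (ex_derive_continuous (fun t => / (1 + t ^ 2))).
  auto_derive. generalize (pow2_ge_0 x). lra.
Qed.

Lemma is_RInt_inv_1_plus_sq (a b : R) :
  is_RInt (fun t => / (1 + t ^ 2)) a b (atan b - atan a).
Proof.
  apply (is_RInt_derive atan).
  - intros x _. apply is_derive_Reals, derivable_pt_lim_atan.
  - intros x _. apply continuous_inv_1_plus_sq.
Qed.

Lemma is_RInt_line_inv_1_plus_sq : is_RInt_line (fun t => / (1 + t ^ 2)) PI.
Proof.
  apply (filterlimi_lim_ext (fun ab => atan (snd ab) - atan (fst ab))).
  { intros [a b]. apply is_RInt_inv_1_plus_sq. }
  replace PI with (plus (PI / 2) (opp (- (PI / 2)))) by (unfold plus, opp; simpl; field).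
  apply (filterlim_comp_2 (G := locally (PI / 2)) (H := locally (- (PI / 2)))
           (fun ab => atan (snd ab)) (fun ab => atan (fst ab)) (fun x y => plus x (opp y))).
  - apply (filterlim_comp _ _ _ snd atan _ (Rbar_locally p_infty));
      [apply filterlim_snd | apply filterlim_atan_p_infty].
  - apply (filterlim_comp _ _ _ fst atan _ (Rbar_locally m_infty));
      [apply filterlim_fst | apply filterlim_atan_m_infty].
  - apply (filterlim_comp_2 (G := locally (PI / 2)) (H := locally (opp (- (PI / 2))))
             fst (fun ab => opp (snd ab)) plus);
      [apply filterlim_fst | | apply (filterlim_plus (K := R_AbsRing) (V := R_NormedModule))].
    apply (filterlim_comp _ _ _ snd opp _ (locally (- (PI / 2))));
      [apply filterlim_snd | apply (filterlim_opp (K := R_AbsRing) (V := R_NormedModule))].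
Qed.

Section DominatedIntegral.

Variables (f : R -> R) (K : R).
Hypothesis f_cont : forall x, continuous f x.
Hypothesis f_dom : forall t, Rabs (f t) <= K / (1 + t ^ 2).

Lemma ex_RInt_dominated (a b : R) : ex_RInt f a b.
Proof. apply (ex_RInt_continuous (V := R_CompleteNormedModule)). intros; apply f_cont. Qed.

Lemma dominating_constant_nonneg : 0 <= K.
Proof.
  generalize (f_dom 0) (Rabs_pos (f 0)). replace (1 + 0 ^ 2) with 1 by ring. lra.
Qed.

Lemma abs_RInt_le_atan (a b : R) : Rabs (RInt f a b) <= K * Rabs (atan b - atan a).
Proof.
  assert (Hle : forall a b, a <= b -> Rabs (RInt f a b) <= K * (atan b - atan a)).
  { clear a b. intros a b Hab.
    eapply Rle_trans; [apply abs_RInt_le; [exact Hab | apply ex_RInt_dominated]|].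
    assert (Hmaj : is_RInt (fun t => K / (1 + t ^ 2)) a b (K * (atan b - atan a)))
      by exact (is_RInt_scal _ _ _ K _ (is_RInt_inv_1_plus_sq a b)).
    rewrite <- (is_RInt_unique _ _ _ _ Hmaj).
    apply RInt_le; [exact Hab | | now exists (K * (atan b - atan a)) |].
    - apply (ex_RInt_continuous (V := R_CompleteNormedModule)). intros z _.
      apply (continuous_comp f Rabs); [apply f_cont | apply continuous_Rabs].
    - intros t _. apply f_dom. }
  destruct (Rle_or_lt a b) as [Hab | Hba].
  - rewrite (Rabs_right (atan b - atan a)); [now apply Hle|].
    destruct Hab as [Hab | ->]; [left; apply Rgt_minus, atan_increasing, Hab | right; ring].
  - rewrite <- (opp_RInt_swap (V := R_CompleteNormedModule)) by apply ex_RInt_dominated.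
    change (Rabs (- RInt f b a) <= K * Rabs (atan b - atan a)).
    rewrite Rabs_Ropp, Rabs_minus_sym, (Rabs_right (atan a - atan b))
      by (left; apply Rgt_minus, atan_increasing, Hba).
    apply Hle. lra.
Qed.

Lemma abs_RInt_diff_le_atan (a b a' b' : R) :
  Rabs (RInt f a' b' - RInt f a b)
  <= K * Rabs (atan a' - atan a) + K * Rabs (atan b - atan b').
Proof.
  replace (RInt f a b) with (RInt f a a' + RInt f a' b' + RInt f b' b).
  - replace (RInt f a' b' - (RInt f a a' + RInt f a' b' + RInt f b' b))
      with (- (RInt f a a' + RInt f b' b)) by ring.
    rewrite Rabs_Ropp. eapply Rle_trans; [apply Rabs_triang|].
    apply Rplus_le_compat; apply abs_RInt_le_atan.
  - rewrite <- (RInt_Chasles (V := R_CompleteNormedModule) f a a' b),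
      <- (RInt_Chasles (V := R_CompleteNormedModule) f a' b' b) by apply ex_RInt_dominated.
    unfold plus; simpl; ring.
Qed.

Lemma ex_RInt_line_dominated : exists l, is_RInt_line f l.
Proof.
  assert (HK := dominating_constant_nonneg).
  assert (Hcauchy : exists l, filterlim (fun ab => RInt f (fst ab) (snd ab))
            (filter_prod (Rbar_locally m_infty) (Rbar_locally p_infty)) (locally l)).
  { apply (filterlim_locally_cauchy (U := R_CompleteSpace)). intros eps.
    set (eta := eps / (4 * (K + 1))).
    assert (Heta : 0 < eta) by (apply Rdiv_lt_0_compat; [apply cond_pos | lra]).
    destruct (proj1 (filterlim_locally _ _) filterlim_atan_m_infty (mkposreal _ Heta))
      as [Ma HMa].
    destruct (proj1 (filterlim_locally _ _) filterlim_atan_p_infty (mkposreal _ Heta))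
      as [Mb HMb].
    exists (fun ab => fst ab < Ma /\ Mb < snd ab). split.
    { exists (fun a => a < Ma) (fun b => Mb < b); [now exists Ma | now exists Mb | easy]. }
    intros [a b] [a' b'] [Ha Hb] [Ha' Hb']. simpl in *.
    assert (Ea : Rabs (atan a' - atan a) < eta + eta)
      by exact (ball_triangle _ _ _ _ _ (ball_sym _ _ _ (HMa a Ha)) (HMa a' Ha')).
    assert (Eb : Rabs (atan b - atan b') < eta + eta)
      by exact (ball_triangle _ _ _ _ _ (ball_sym _ _ _ (HMb b' Hb')) (HMb b Hb)).
    change (Rabs (RInt f a' b' - RInt f a b) < eps).
    eapply Rle_lt_trans; [apply abs_RInt_diff_le_atan|].
    assert (K * Rabs (atan a' - atan a) <= K * (2 * eta)) by (apply Rmult_le_compat_l; lra).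
    assert (K * Rabs (atan b - atan b') <= K * (2 * eta)) by (apply Rmult_le_compat_l; lra).
    assert (K * (2 * eta) + K * (2 * eta) < eps).
    { unfold eta. generalize (cond_pos eps). intros.
      apply (Rmult_lt_reg_r (K + 1)); [lra|]. field_simplify; [nra | lra]. }
    lra. }
  destruct Hcauchy as [l Hl]. exists l.
  apply (filterlimi_lim_ext (fun ab => RInt f (fst ab) (snd ab))); [|exact Hl].
  intros [a b]. apply (RInt_correct (V := R_CompleteNormedModule)), ex_RInt_dominated.
Qed.

Lemma is_RInt_line_dominated_bound (l : R) : is_RInt_line f l -> Rabs l <= K * PI.
Proof.
  intros Hl.
  apply (RInt_gen_norm (V := R_CompleteNormedModule) (Fa := Rbar_locally m_infty)
           (Fb := Rbar_locally p_infty) f (fun t => K / (1 + t ^ 2)) l (K * PI)).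
  - exists (fun a => a < 0) (fun b => 0 < b); [now exists 0 | now exists 0 |].
    simpl; intros; lra.
  - apply filter_forall. intros ab t _. apply f_dom.
  - exact Hl.
  - exact (is_RInt_gen_scal _ K _ is_RInt_line_inv_1_plus_sq).
Qed.

End DominatedIntegral.

Lemma is_RInt_reflect (g : R -> R) (c a b l : R) :
  is_RInt g (c - b) (c - a) l -> is_RInt (fun y => g (c - y)) a b l.
Proof.
  intros Hg. apply is_RInt_swap in Hg.
  replace (c - a) with (-1 * a + c) in Hg by ring.
  replace (c - b) with (-1 * b + c) in Hg by ring.
  apply is_RInt_comp_lin, is_RInt_opp in Hg. rewrite opp_opp in Hg.
  revert Hg. apply is_RInt_ext. intros y _.
  unfold opp, scal; simpl; unfold mult; simpl.
  replace (-1 * y + c) with (c - y) by ring. ring.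
Qed.


Lemma is_RInt_line_reflect (g : R -> R) (c l : R) :
  is_RInt_line g l -> is_RInt_line (fun y => g (c - y)) l.
Proof.
  intros Hg.
  apply (filterlimi_ext (fun ab L => is_RInt g (c - snd ab) (c - fst ab) L)).
  { intros [a b] L; simpl. split; [apply is_RInt_reflect|]. intros H.
    assert (H' : is_RInt (fun y => g (c - (c - y))) (c - b) (c - a) L).
    { apply (is_RInt_reflect (fun y => g (c - y))).
      replace (c - (c - a)) with a by ring. replace (c - (c - b)) with b by ring. exact H. }
    revert H'. apply is_RInt_ext. intros y _. f_equal. ring. }
  assert (Hmap : filterlim (fun ab => (c - snd ab, c - fst ab))
    (filter_prod (Rbar_locally m_infty) (Rbar_locally p_infty))
    (filter_prod (Rbar_locally m_infty) (Rbar_locally p_infty))).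
  { intros P [Q S [Ma HQ] [Mb HS] HP].
    exists (fun a => a < c - Mb) (fun b => c - Ma < b);
      [now exists (c - Mb) | now exists (c - Ma) |].
    intros a b Ha Hb. apply HP; [apply HQ | apply HS]; simpl; lra. }
  exact (filterlimi_comp _ _ _ _ (fun ab L => is_RInt g (fst ab) (snd ab) L) _ _ _ Hmap Hg).
Qed.

Lemma is_RInt_line_sum (F : nat -> R -> R) (L : nat -> R) (n : nat) :
  (forall i, is_RInt_line (F i) (L i)) ->
  is_RInt_line (fun u => sum_f_R0 (fun i => F i u) n) (sum_f_R0 L n).
Proof.
  intros HF. induction n as [|n IH]; simpl; [apply HF|].
  exact (is_RInt_gen_plus _ _ _ _ IH (HF (S n))).
Qed.

Lemma is_lim_seq_partial_sums (u : nat -> R) (l : R) :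
  is_series u l -> is_lim_seq (fun N => sum_f_R0 u N) l.
Proof. intros H. apply (is_lim_seq_ext (sum_n u)); [intros; apply sum_n_Reals | exact H]. Qed.

Lemma partial_sum_le_series (u : nat -> R) (l : R) (N : nat) :
  (forall n, 0 <= u n) -> is_series u l -> sum_f_R0 u N <= l.
Proof.
  intros Hu Hl.
  apply (is_lim_seq_le_loc (fun _ => sum_f_R0 u N) (fun n => sum_f_R0 u n) (sum_f_R0 u N) l);
    [| apply is_lim_seq_const | now apply is_lim_seq_partial_sums].
  exists N. intros n Hn. destruct (Compare_dec.le_lt_eq_dec _ _ Hn) as [Hlt | ->]; [|lra].
  rewrite (tech2 u N n Hlt). generalize (cond_pos_sum (fun i => u (S N + i)%nat) (n - S N)).
  intros H; specialize (H (fun i => Hu _)). lra.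
Qed.

Section MajorizedPowerSeries.

Variables (a b : nat -> R) (r M : R).
Hypothesis r_pos : 0 < r.
Hypothesis a_le_b : forall n, Rabs (a n) <= b n.
Hypothesis b_series : is_series (fun n => b n * r ^ n) M.

Let majorant_nonneg (n : nat) : 0 <= b n * r ^ n.
Proof.
  apply Rmult_le_pos; [apply (Rle_trans _ _ _ (Rabs_pos (a n)) (a_le_b n)) | apply pow_le; lra].
Qed.

Lemma Rabs_coef_le_majorant (n : nat) : Rabs (a n) <= M / r ^ n.
Proof.
  assert (Hrn : 0 < r ^ n) by (apply pow_lt, r_pos).
  apply (Rmult_le_reg_r (r ^ n)); [exact Hrn|]. unfold Rdiv.
  rewrite Rmult_assoc, Rinv_l, Rmult_1_r by lra.
  apply (Rle_trans _ (b n * r ^ n)); [apply Rmult_le_compat_r; [lra | apply a_le_b]|].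
  apply (Rle_trans _ (sum_f_R0 (fun k => b k * r ^ k) n)).
  - destruct n as [|n]; simpl; [lra|].
    generalize (cond_pos_sum _ n majorant_nonneg). lra.
  - now apply partial_sum_le_series.
Qed.

Variables (x : R) (m : nat).
Hypothesis x_le_r : Rabs x <= r.

Let ratio_bounds : 0 <= Rabs x / r <= 1.
Proof.
  split; [apply Rdiv_le_0_compat; [apply Rabs_pos | lra]|].
  apply (Rmult_le_reg_r r); [lra|]. unfold Rdiv.
  rewrite Rmult_assoc, Rinv_l, Rmult_1_r, Rmult_1_l by lra. exact x_le_r.
Qed.

Lemma pseries_term_le (n : nat) : (m < n)%nat ->
  Rabs (a n * x ^ n) <= b n * r ^ n * (Rabs x / r) ^ S m.
Proof.
  intros Hn. assert (Hq := ratio_bounds). set (q := Rabs x / r) in Hq |- *.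
  replace (Rabs (a n * x ^ n)) with (Rabs (a n) * r ^ n * q ^ n)
    by (unfold q, Rdiv; rewrite Rabs_mult, <- RPow_abs, Rpow_mult_distr, pow_inv;
        field; apply pow_nonzero; lra).
  replace (q ^ n) with (q ^ S m * q ^ (n - S m)) by (rewrite <- pow_add; f_equal; lia).
  assert (Hqk : q ^ (n - S m) <= 1) by (rewrite <- (pow1 (n - S m)); apply pow_incr; lra).
  assert (0 <= Rabs (a n) * r ^ n) by (apply Rmult_le_pos; [apply Rabs_pos | apply pow_le; lra]).
  assert (Rabs (a n) * r ^ n <= b n * r ^ n)
    by (apply Rmult_le_compat_r; [apply pow_le; lra | apply a_le_b]).
  rewrite (Rmult_comm (q ^ S m)), <- Rmult_assoc.
  apply Rmult_le_compat_r; [apply pow_le; lra|].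
  apply (Rle_trans _ (Rabs (a n) * r ^ n * 1)); [apply Rmult_le_compat_l|]; lra.
Qed.

Lemma pseries_partial_sum_diff_le (N : nat) : (m < N)%nat ->
  Rabs (sum_f_R0 (fun n => a n * x ^ n) N - sum_f_R0 (fun n => a n * x ^ n) m)
  <= (Rabs x / r) ^ S m * M.
Proof.
  intros HN. assert (Hq := ratio_bounds). rewrite (tech2 _ m N HN).
  replace (sum_f_R0 (fun n => a n * x ^ n) m
           + sum_f_R0 (fun i => a (S m + i)%nat * x ^ (S m + i)) (N - S m)
           - sum_f_R0 (fun n => a n * x ^ n) m)
    with (sum_f_R0 (fun i => a (S m + i)%nat * x ^ (S m + i)) (N - S m)) by ring.
  eapply Rle_trans; [apply sum_f_R0_triangle|].
  eapply Rle_trans.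
  { apply (sum_Rle _ (fun i => b (S m + i)%nat * r ^ (S m + i) * (Rabs x / r) ^ S m)).
    intros i _. apply pseries_term_le. lia. }
  rewrite <- scal_sum. apply Rmult_le_compat_l; [apply pow_le; lra|].
  apply (Rle_trans _ (sum_f_R0 (fun n => b n * r ^ n) N)); [|now apply partial_sum_le_series].
  rewrite (tech2 _ m N HN). generalize (cond_pos_sum _ m majorant_nonneg). lra.
Qed.

Lemma pseries_remainder_le (l : R) : is_series (fun n => a n * x ^ n) l ->
  Rabs (l - sum_f_R0 (fun n => a n * x ^ n) m) <= (Rabs x / r) ^ S m * M.
Proof.
  intros Hl. set (T := sum_f_R0 (fun n => a n * x ^ n)).
  assert (Hlim : is_lim_seq (fun N => Rabs (T N - T m)) (Rabs (l - T m))).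
  { apply (is_lim_seq_abs _ (Finite (l - T m))).
    apply is_lim_seq_minus'; [now apply is_lim_seq_partial_sums | apply is_lim_seq_const]. }
  apply (is_lim_seq_le_loc (fun N => Rabs (T N - T m)) (fun _ => (Rabs x / r) ^ S m * M)
           (Rabs (l - T m)) ((Rabs x / r) ^ S m * M)); [| exact Hlim | apply is_lim_seq_const].
  exists (S m). intros N HN. apply pseries_partial_sum_diff_le. lia.
Qed.

End MajorizedPowerSeries.

Definition exp_coef (a : R) (j : nat) : R := a ^ j / INR (fact j).

Definition exp_sq_coef (c : R) (i : nat) : R :=
  if Nat.even i then c ^ Nat.div2 i / INR (fact (Nat.div2 i)) else 0.

Definition exp_quad_coef (a c : R) : nat -> R := PS_mult (exp_coef a) (exp_sq_coef c).

Lemma INR_fact_pos (n : nat) : 0 < INR (fact n).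
Proof. apply lt_0_INR, lt_O_fact. Qed.

Lemma Rabs_exp_coef (a : R) (j : nat) : Rabs (exp_coef a j) = exp_coef (Rabs a) j.
Proof.
  unfold exp_coef. assert (Hf := INR_fact_pos j).
  rewrite Rabs_div, <- RPow_abs, (Rabs_right (INR (fact j))) by (apply Rgt_not_eq || left; lra).
  reflexivity.
Qed.

Lemma Rabs_exp_sq_coef (c : R) (i : nat) : Rabs (exp_sq_coef c i) = exp_sq_coef (Rabs c) i.
Proof.
  unfold exp_sq_coef. destruct (Nat.even i); [|apply Rabs_R0].
  assert (Hf := INR_fact_pos (Nat.div2 i)).
  rewrite Rabs_div, <- RPow_abs, (Rabs_right (INR (fact _))) by (apply Rgt_not_eq || left; lra).
  reflexivity.
Qed.

Lemma Rabs_exp_quad_coef_le (a c : R) (n : nat) :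
  Rabs (exp_quad_coef a c n) <= exp_quad_coef (Rabs a) (Rabs c) n.
Proof.
  unfold exp_quad_coef, PS_mult. eapply Rle_trans; [apply sum_f_R0_triangle|].
  right. apply sum_eq. intros k _.
  rewrite Rabs_mult, Rabs_exp_coef, Rabs_exp_sq_coef. reflexivity.
Qed.

Lemma pow_n_R_AbsRing (y : R) (k : nat) : @pow_n (AbsRing.Ring R_AbsRing) y k = y ^ k.
Proof. induction k as [|k IH]; simpl; [reflexivity | now rewrite IH]. Qed.

Lemma is_series_exp_coef (a x : R) :
  is_series (fun j => exp_coef a j * x ^ j) (exp (a * x)).
Proof.
  eapply is_series_ext; [|exact (is_exp_Reals (a * x))]. intros n. simpl.
  rewrite pow_n_pow. unfold exp_coef, scal; simpl; unfold mult; simpl.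
  rewrite Rpow_mult_distr. field. apply not_0_INR, fact_neq_0.
Qed.

Lemma is_series_exp_sq_coef (c x : R) :
  is_series (fun i => exp_sq_coef c i * x ^ i) (exp (c * x ^ 2)).
Proof.
  assert (Heven : is_pseries (fun n => exp_sq_coef c (2 * n)) (x ^ 2) (exp (c * x ^ 2))).
  { eapply is_series_ext; [|exact (is_exp_Reals (c * x ^ 2))]. intros n. cbv beta.
    unfold exp_sq_coef. rewrite Nat.even_even, Nat.div2_double.
    unfold scal; simpl; unfold mult; simpl.
    rewrite pow_n_R_AbsRing, (pow_n_R_AbsRing (x * (x * 1))), Rpow_mult_distr. field.
    apply not_0_INR, fact_neq_0. }
  assert (Hodd : is_pseries (fun n => exp_sq_coef c (2 * n + 1)) (x ^ 2) 0).
  { assert (Hzero : is_series (fun _ => 0) 0).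
    { apply (is_lim_seq_ext (fun _ => 0) _ 0); [|apply is_lim_seq_const].
      intros N. rewrite sum_n_Reals. symmetry. now apply sum_eq_R0. }
    eapply is_series_ext; [|exact Hzero].
    intros n. unfold exp_sq_coef. rewrite Nat.even_odd.
    unfold scal; simpl; unfold mult; simpl. ring. }
  replace (exp (c * x ^ 2)) with (exp (c * x ^ 2) + x * 0) by ring.
  eapply is_series_ext; [|exact (is_pseries_odd_even _ _ _ _ Heven Hodd)].
  intros n. unfold scal; simpl; unfold mult; simpl. rewrite pow_n_R_AbsRing. ring.
Qed.

Lemma is_series_exp_quad_coef (a c x : R) :
  is_series (fun n => exp_quad_coef a c n * x ^ n) (exp (a * x + c * x ^ 2)).
Proof.
  rewrite exp_plus.
  eapply is_series_ext;
    [|apply (is_series_mult _ _ _ _ (is_series_exp_coef a x) (is_series_exp_sq_coef c x))].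
  - intros n. unfold exp_quad_coef, PS_mult. rewrite Rmult_comm, scal_sum. apply sum_eq.
    intros k Hk. replace (x ^ n) with (x ^ k * x ^ (n - k)) by (rewrite <- pow_add; f_equal; lia).
    ring.
  - eapply ex_series_ext; [|eexists; apply (is_series_exp_coef (Rabs a) (Rabs x))].
    intros n. rewrite Rabs_mult, Rabs_exp_coef, RPow_abs. reflexivity.
  - eapply ex_series_ext; [|eexists; apply (is_series_exp_sq_coef (Rabs c) (Rabs x))].
    intros n. rewrite Rabs_mult, Rabs_exp_sq_coef, RPow_abs. reflexivity.
Qed.

Lemma exp_le_compat (x y : R) : x <= y -> exp x <= exp y.
Proof. intros [Hlt | ->]; [left; now apply exp_increasing | right; reflexivity]. Qed.

Lemma pow3_1_plus_le_exp (z : R) : 0 <= z -> (1 + z) ^ 3 <= exp (3 * z).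
Proof.
  intros Hz. replace (3 * z) with (z + z + z) by ring. rewrite !exp_plus.
  replace (exp z * exp z * exp z) with (exp z ^ 3) by ring.
  apply pow_incr. split; [lra | apply exp_ineq1_le].
Qed.

Lemma cubic_moment_le (u r : R) : 0 <= r ->
  (1 + u ^ 2) * Rabs u <= (1 + r) ^ 3 * exp (3 * Rabs (Rabs u - r)).
Proof.
  intros Hr. set (w := Rabs u). set (z := Rabs (w - r)).
  assert (Hw : 0 <= w) by apply Rabs_pos. assert (Hz : 0 <= z) by apply Rabs_pos.
  apply (Rle_trans _ (((1 + r) * (1 + z)) ^ 3)).
  - apply (Rle_trans _ ((1 + w) ^ 3)); [rewrite <- (pow2_abs u); simpl; fold w; nra|].
    apply pow_incr. split; [lra|]. unfold z.
    destruct (Rle_dec r w); [rewrite Rabs_right | rewrite Rabs_left1]; nra.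
  - rewrite Rpow_mult_distr. apply Rmult_le_compat_l; [apply pow_le; lra|].
    apply pow3_1_plus_le_exp, Hz.
Qed.

Definition shift_lin (sigma u : R) : R := 1 + u / sigma ^ 2.
Definition shift_quad (sigma : R) : R := - / (2 * sigma ^ 2).

(* [9 sigma^2 / 2] is the maximum of [3 z - z^2 / (2 sigma^2)], see [gauss_exponent_le]. *)
Definition gauss_const (sigma : R) : R := exp (9 * sigma ^ 2 / 2) / (sqrt (2 * PI) * sigma).
Definition gauss_weight (sigma r : R) : R := (1 + r) ^ 3 * exp (r + r ^ 2 / sigma ^ 2).

Section Gaussian.

Variable sigma : R.
Hypothesis sigma_pos : 0 < sigma.

Let sigma2_pos : 0 < sigma ^ 2.
Proof. apply pow_lt, sigma_pos. Qed.

Let sqrt_2PI_pos : 0 < sqrt (2 * PI).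
Proof. apply sqrt_lt_R0. generalize PI_RGT_0. lra. Qed.

Let norm_const_pos : 0 < sqrt (2 * PI) * sigma.
Proof. apply Rmult_lt_0_compat; [exact sqrt_2PI_pos | exact sigma_pos]. Qed.

Lemma gauss_density_pos (u : R) : 0 < gauss_density sigma u.
Proof. apply Rdiv_lt_0_compat; [apply exp_pos | exact norm_const_pos]. Qed.

Lemma gauss_const_pos : 0 < gauss_const sigma.
Proof. apply Rdiv_lt_0_compat; [apply exp_pos | exact norm_const_pos]. Qed.

Lemma gauss_density_shift (theta u : R) :
  gauss_density sigma (theta - u) =
  exp (- theta) * gauss_density sigma u
  * exp (shift_lin sigma u * theta + shift_quad sigma * theta ^ 2).
Proof.
  unfold gauss_density.
  replace (- (theta - u) ^ 2 / (2 * sigma ^ 2))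
    with (- theta + (- u ^ 2 / (2 * sigma ^ 2)
          + (shift_lin sigma u * theta + shift_quad sigma * theta ^ 2)))
    by (unfold shift_lin, shift_quad; field; lra).
  generalize sqrt_2PI_pos. intros. rewrite !exp_plus. field. split; lra.
Qed.

Lemma gauss_exponent_le (u r : R) :
  - u ^ 2 / (2 * sigma ^ 2) + (1 + Rabs u / sigma ^ 2) * r + 3 * Rabs (Rabs u - r)
  <= 9 * sigma ^ 2 / 2 + (r + r ^ 2 / (2 * sigma ^ 2)).
Proof.
  set (z := Rabs (Rabs u - r)).
  replace (- u ^ 2 / (2 * sigma ^ 2) + (1 + Rabs u / sigma ^ 2) * r + 3 * z)
    with (9 * sigma ^ 2 / 2 + (r + r ^ 2 / (2 * sigma ^ 2))
          - (z - 3 * sigma ^ 2) ^ 2 / (2 * sigma ^ 2)).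
  - assert (0 <= (z - 3 * sigma ^ 2) ^ 2 / (2 * sigma ^ 2))
      by (apply Rdiv_le_0_compat; [apply pow2_ge_0 | lra]).
    lra.
  - rewrite <- (pow2_abs u). field_simplify_eq; [|lra].
    unfold z. rewrite <- (Rsqr_pow2 (Rabs (Rabs u - r))), <- Rsqr_abs, Rsqr_pow2. ring.
Qed.

Lemma gauss_moment_exp_le (u r : R) : 0 <= r ->
  (1 + u ^ 2) * Rabs u * gauss_density sigma u * exp ((1 + Rabs u / sigma ^ 2) * r)
  <= gauss_const sigma * ((1 + r) ^ 3 * exp (r + r ^ 2 / (2 * sigma ^ 2))).
Proof.
  intros Hr. unfold gauss_density, gauss_const.
  set (E1 := exp (- u ^ 2 / (2 * sigma ^ 2))). set (E2 := exp ((1 + Rabs u / sigma ^ 2) * r)).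
  assert (HE : 0 <= E1 * E2) by (left; apply Rmult_lt_0_compat; apply exp_pos).
  assert (Hinv : 0 <= / (sqrt (2 * PI) * sigma))
    by (left; apply Rinv_0_lt_compat, norm_const_pos).
  replace ((1 + u ^ 2) * Rabs u * (E1 / (sqrt (2 * PI) * sigma)) * E2)
    with ((1 + u ^ 2) * Rabs u * (E1 * E2) * / (sqrt (2 * PI) * sigma)) by (unfold Rdiv; ring).
  replace (exp (9 * sigma ^ 2 / 2) / (sqrt (2 * PI) * sigma)
           * ((1 + r) ^ 3 * exp (r + r ^ 2 / (2 * sigma ^ 2))))
    with ((1 + r) ^ 3 * exp (9 * sigma ^ 2 / 2 + (r + r ^ 2 / (2 * sigma ^ 2)))
          * / (sqrt (2 * PI) * sigma)) by (rewrite exp_plus; unfold Rdiv; ring).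
  apply Rmult_le_compat_r; [exact Hinv|].
  apply (Rle_trans _ ((1 + r) ^ 3 * exp (3 * Rabs (Rabs u - r)) * (E1 * E2)));
    [apply Rmult_le_compat_r; [exact HE | now apply cubic_moment_le]|].
  rewrite Rmult_assoc. apply Rmult_le_compat_l; [apply pow_le; lra|].
  unfold E1, E2. rewrite <- !exp_plus. apply exp_le_compat.
  generalize (gauss_exponent_le u r). lra.
Qed.

End Gaussian.

(* Taylor coefficients in [theta] of [e^theta (phi(theta - u) / phi(u) - 1)],
   see [gauss_density_shift]. *)
Definition tilt_coef (sigma u : R) (n : nat) : R :=
  exp_quad_coef (shift_lin sigma u) (shift_quad sigma) n - exp_quad_coef 1 0 n.

Definition tilt_majorant (sigma u r : R) : R :=
  exp (Rabs (shift_lin sigma u) * r + Rabs (shift_quad sigma) * r ^ 2) + exp r.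

Section Tilt.

Variable sigma : R.
Hypothesis sigma_pos : 0 < sigma.

Let sigma2_pos : 0 < sigma ^ 2.
Proof. apply pow_lt, sigma_pos. Qed.

Let Rabs_shift_quad : Rabs (shift_quad sigma) = / (2 * sigma ^ 2).
Proof.
  unfold shift_quad. rewrite Rabs_Ropp, Rabs_right; [reflexivity|].
  left; apply Rinv_0_lt_compat; lra.
Qed.

Lemma is_series_tilt_coef (u x : R) :
  is_series (fun n => tilt_coef sigma u n * x ^ n)
    (exp (shift_lin sigma u * x + shift_quad sigma * x ^ 2) - exp x).
Proof.
  replace (exp x) with (exp (1 * x + 0 * x ^ 2)) by (f_equal; ring).
  eapply is_series_ext; [|exact (is_series_minus _ _ _ _
    (is_series_exp_quad_coef (shift_lin sigma u) (shift_quad sigma) x)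
    (is_series_exp_quad_coef 1 0 x))].
  intros n. unfold tilt_coef, minus, plus, opp; simpl. ring.
Qed.

Let tilt_coef_majorant (u : R) (n : nat) : R :=
  exp_quad_coef (Rabs (shift_lin sigma u)) (Rabs (shift_quad sigma)) n + exp_quad_coef 1 0 n.

Let Rabs_tilt_coef_le_majorant (u : R) (n : nat) :
  Rabs (tilt_coef sigma u n) <= tilt_coef_majorant u n.
Proof.
  unfold tilt_coef, tilt_coef_majorant. eapply Rle_trans; [apply Rabs_triang|].
  rewrite Rabs_Ropp. apply Rplus_le_compat; [apply Rabs_exp_quad_coef_le|].
  generalize (Rabs_exp_quad_coef_le 1 0 n). now rewrite Rabs_R1, Rabs_R0.
Qed.

Let is_series_tilt_coef_majorant (u r : R) :
  is_series (fun n => tilt_coef_majorant u n * r ^ n) (tilt_majorant sigma u r).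
Proof.
  unfold tilt_majorant. replace (exp r) with (exp (1 * r + 0 * r ^ 2)) by (f_equal; ring).
  eapply is_series_ext; [|exact (is_series_plus _ _ _ _
    (is_series_exp_quad_coef (Rabs (shift_lin sigma u)) (Rabs (shift_quad sigma)) r)
    (is_series_exp_quad_coef 1 0 r))].
  intros n. unfold tilt_coef_majorant, plus; simpl. ring.
Qed.

Lemma Rabs_tilt_coef_le (u r : R) (n : nat) :
  0 < r -> Rabs (tilt_coef sigma u n) <= tilt_majorant sigma u r / r ^ n.
Proof.
  intros Hr. exact (Rabs_coef_le_majorant _ _ _ _ Hr (Rabs_tilt_coef_le_majorant u)
                     (is_series_tilt_coef_majorant u r) n).
Qed.

Lemma tilt_remainder_le (u r x : R) (m : nat) : 0 < r -> Rabs x <= r ->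
  Rabs (exp (shift_lin sigma u * x + shift_quad sigma * x ^ 2) - exp x
        - sum_f_R0 (fun n => tilt_coef sigma u n * x ^ n) m)
  <= (Rabs x / r) ^ S m * tilt_majorant sigma u r.
Proof.
  intros Hr Hx. exact (pseries_remainder_le _ _ _ _ Hr (Rabs_tilt_coef_le_majorant u)
                        (is_series_tilt_coef_majorant u r) x m Hx _ (is_series_tilt_coef u x)).
Qed.

Lemma tilt_majorant_le (u r : R) : 0 <= r ->
  tilt_majorant sigma u r
  <= 2 * exp ((1 + Rabs u / sigma ^ 2) * r) * exp (r ^ 2 / (2 * sigma ^ 2)).
Proof.
  intros Hr. unfold tilt_majorant. rewrite Rabs_shift_quad.
  assert (Hlin : Rabs (shift_lin sigma u) <= 1 + Rabs u / sigma ^ 2).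
  { unfold shift_lin. eapply Rle_trans; [apply Rabs_triang|].
    rewrite Rabs_R1, Rabs_div, (Rabs_right (sigma ^ 2)); lra. }
  assert (Hr2 : 0 <= r ^ 2 / (2 * sigma ^ 2))
    by (apply Rdiv_le_0_compat; [apply pow2_ge_0 | lra]).
  assert (H1 : exp (Rabs (shift_lin sigma u) * r + / (2 * sigma ^ 2) * r ^ 2)
               <= exp ((1 + Rabs u / sigma ^ 2) * r) * exp (r ^ 2 / (2 * sigma ^ 2))).
  { rewrite <- exp_plus. apply exp_le_compat. unfold Rdiv.
    rewrite (Rmult_comm (r ^ 2)). apply Rplus_le_compat_r, Rmult_le_compat_r; lra. }
  assert (H2 : exp r <= exp ((1 + Rabs u / sigma ^ 2) * r) * exp (r ^ 2 / (2 * sigma ^ 2))).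
  { rewrite <- exp_plus. apply exp_le_compat.
    assert (0 <= Rabs u / sigma ^ 2 * r)
      by (apply Rmult_le_pos; [apply Rdiv_le_0_compat; [apply Rabs_pos | lra] | lra]).
    nra. }
  lra.
Qed.

Lemma gauss_weighted_tilt_majorant_le (u r : R) : 0 <= r ->
  (1 + u ^ 2) * Rabs u * gauss_density sigma u * tilt_majorant sigma u r
  <= 2 * gauss_const sigma * gauss_weight sigma r.
Proof.
  intros Hr.
  assert (Hpos : 0 <= (1 + u ^ 2) * Rabs u * gauss_density sigma u).
  { apply Rmult_le_pos; [apply Rmult_le_pos; [generalize (pow2_ge_0 u); lra | apply Rabs_pos]|].
    left; apply gauss_density_pos, sigma_pos. }
  eapply Rle_trans; [apply Rmult_le_compat_l; [exact Hpos | apply tilt_majorant_le, Hr]|].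
  replace ((1 + u ^ 2) * Rabs u * gauss_density sigma u
           * (2 * exp ((1 + Rabs u / sigma ^ 2) * r) * exp (r ^ 2 / (2 * sigma ^ 2))))
    with (2 * exp (r ^ 2 / (2 * sigma ^ 2)) * ((1 + u ^ 2) * Rabs u * gauss_density sigma u
           * exp ((1 + Rabs u / sigma ^ 2) * r))) by ring.
  replace (2 * gauss_const sigma * gauss_weight sigma r)
    with (2 * exp (r ^ 2 / (2 * sigma ^ 2)) * (gauss_const sigma
           * ((1 + r) ^ 3 * exp (r + r ^ 2 / (2 * sigma ^ 2)))))
    by (unfold gauss_weight; replace (r + r ^ 2 / sigma ^ 2)
          with (r + r ^ 2 / (2 * sigma ^ 2) + r ^ 2 / (2 * sigma ^ 2)) by (field; lra);
        rewrite (exp_plus (r + r ^ 2 / (2 * sigma ^ 2))); ring).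
  apply Rmult_le_compat_l; [generalize (exp_pos (r ^ 2 / (2 * sigma ^ 2))); lra|].
  apply gauss_moment_exp_le; assumption.
Qed.

Lemma gauss_density_shift_le (theta u : R) : 0 <= theta ->
  gauss_density sigma (theta - u) <= gauss_density sigma u * tilt_majorant sigma u theta.
Proof.
  intros Hth. rewrite gauss_density_shift by exact sigma_pos.
  assert (Hg := gauss_density_pos sigma sigma_pos u).
  rewrite (Rmult_comm (exp (- theta))), Rmult_assoc.
  apply Rmult_le_compat_l; [lra|]. rewrite <- exp_plus. unfold tilt_majorant.
  assert (exp (- theta + (shift_lin sigma u * theta + shift_quad sigma * theta ^ 2))
          <= exp (Rabs (shift_lin sigma u) * theta + Rabs (shift_quad sigma) * theta ^ 2)).
  { apply exp_le_compat. rewrite Rabs_shift_quad. unfold shift_quad.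
    assert (shift_lin sigma u * theta <= Rabs (shift_lin sigma u) * theta)
      by (apply Rmult_le_compat_r; [lra | apply Rle_abs]).
    assert (0 <= / (2 * sigma ^ 2) * theta ^ 2)
      by (apply Rmult_le_pos; [left; apply Rinv_0_lt_compat; lra | apply pow2_ge_0]).
    lra. }
  generalize (exp_pos theta). lra.
Qed.

Lemma Rabs_le_of_tilt_majorant (u r B g : R) : 0 <= r -> 0 <= B ->
  Rabs g <= Rabs u * gauss_density sigma u * tilt_majorant sigma u r * B ->
  Rabs g <= 2 * gauss_const sigma * gauss_weight sigma r * B / (1 + u ^ 2).
Proof.
  intros Hr HB Hg. assert (Hu2 : 0 < 1 + u ^ 2) by (generalize (pow2_ge_0 u); lra).
  apply (Rmult_le_reg_r (1 + u ^ 2)); [exact Hu2|].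
  unfold Rdiv. rewrite Rmult_assoc, Rinv_l, Rmult_1_r by lra.
  apply (Rle_trans _ ((1 + u ^ 2) * Rabs u * gauss_density sigma u * tilt_majorant sigma u r * B)).
  - rewrite Rmult_comm. rewrite !Rmult_assoc. apply Rmult_le_compat_l; [lra|].
    rewrite <- !Rmult_assoc. exact Hg.
  - apply Rmult_le_compat_r; [exact HB | apply gauss_weighted_tilt_majorant_le, Hr].
Qed.

End Tilt.

Lemma ln_le_sub_1 (z : R) : 0 < z -> ln z <= z - 1.
Proof. intros Hz. generalize (exp_ineq1_le (ln z)). rewrite exp_ln by exact Hz. lra. Qed.

Lemma fact_le_exp (n : nat) : (1 <= n)%nat ->
  INR (fact n) <= exp (1 + ln (INR n) + INR n * (ln (INR n) - 1)).
Proof.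
  intros Hn. induction Hn as [|n Hn IH].
  - simpl. rewrite ln_1. replace (1 + 0 + 1 * (0 - 1)) with 0 by ring. rewrite exp_0. lra.
  - rewrite fact_simpl, mult_INR, S_INR.
    assert (HN : 1 <= INR n) by (apply (le_INR 1); exact Hn).
    assert (Hln : 1 <= (INR n + 1) * (ln (INR n + 1) - ln (INR n))).
    { assert (H := ln_le_sub_1 (INR n / (INR n + 1)) ltac:(apply Rdiv_lt_0_compat; lra)).
      unfold Rdiv in H. rewrite ln_mult, ln_Rinv in H by (try apply Rinv_0_lt_compat; lra).
      replace (INR n * / (INR n + 1) - 1) with (- / (INR n + 1)) in H by (field; lra).
      apply (Rmult_le_reg_r (/ (INR n + 1))); [apply Rinv_0_lt_compat; lra|].
      replace ((INR n + 1) * (ln (INR n + 1) - ln (INR n)) * / (INR n + 1))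
        with (ln (INR n + 1) - ln (INR n)) by (field; lra). lra. }
    apply (Rle_trans _ ((INR n + 1) * exp (1 + ln (INR n) + INR n * (ln (INR n) - 1)))).
    { apply Rmult_le_compat_l; lra. }
    rewrite <- (exp_ln (INR n + 1)) at 1 by lra. rewrite <- exp_plus.
    apply exp_le_compat. nra.
Qed.

Lemma fact_gauss_ratio_le (sigma : R) (n : nat) : 0 < sigma ->
  INR (fact n) * exp (INR n / 2) / (sigma * sqrt (INR n / 2)) ^ n
  <= exp 1 * (INR n + 1) * exp (INR n * ln 2 / 2) * pw_term n sigma.
Proof.
  intros Hs. destruct n as [|n'].
  - simpl. rewrite Rmult_0_l, Rdiv_0_l, exp_0. generalize (exp_ineq1_le 1). lra.
  - set (n := S n'). set (N := INR n).
    assert (HN : 1 <= N) by (unfold N, n; rewrite S_INR; generalize (pos_INR n'); lra).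
    assert (Hsq : 0 < sqrt (N / 2)) by (apply sqrt_lt_R0; lra).
    assert (Hpw : pw_term n sigma = exp (N / 2 * (ln N - (1 + 2 * ln sigma)))).
    { unfold pw_term, n, Rpower. fold n N. f_equal. f_equal.
      unfold Rdiv. rewrite ln_mult, ln_Rinv, ln_mult, ln_exp
        by (try apply Rinv_0_lt_compat; try apply Rmult_lt_0_compat;
            try apply pow_lt; try apply exp_pos; lra).
      simpl. rewrite Rmult_1_r, ln_mult by lra. ring. }
    assert (Hln_sq : ln (sqrt (N / 2)) = (ln N - ln 2) / 2).
    { rewrite <- Rpower_sqrt by lra. unfold Rpower. rewrite ln_exp. unfold Rdiv.
      rewrite ln_mult, ln_Rinv by (try apply Rinv_0_lt_compat; lra). ring. }
    assert (Hpow : (sigma * sqrt (N / 2)) ^ n = exp (N * (ln sigma + (ln N - ln 2) / 2))).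
    { rewrite <- (exp_ln ((sigma * sqrt (N / 2)) ^ n))
        by (apply pow_lt, Rmult_lt_0_compat; lra).
      rewrite ln_pow, ln_mult, Hln_sq by (try apply Rmult_lt_0_compat; lra). reflexivity. }
    assert (Hfact := fact_le_exp n ltac:(unfold n; lia)). fold N in Hfact.
    rewrite Hpow, Hpw.
    apply (Rle_trans _ (exp (1 + ln N + N * (ln N - 1)) * exp (N / 2)
                        / exp (N * (ln sigma + (ln N - ln 2) / 2)))).
    { unfold Rdiv. apply Rmult_le_compat_r; [left; apply Rinv_0_lt_compat, exp_pos|].
      apply Rmult_le_compat_r; [left; apply exp_pos | exact Hfact]. }
    apply (Rle_trans _ (exp 1 * N * exp (N * ln 2 / 2)
                        * exp (N / 2 * (ln N - (1 + 2 * ln sigma))))).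
    + right. replace (exp 1 * N) with (exp (1 + ln N)) by (rewrite exp_plus, exp_ln; lra).
      unfold Rdiv at 1. rewrite <- exp_Ropp, <- !exp_plus. f_equal. field.
    + repeat apply Rmult_le_compat_r; try (left; apply exp_pos).
      apply Rmult_le_compat_l; [left; apply exp_pos | lra].
Qed.

Lemma poly_exp_sqrt_le (a g y : R) : 0 <= a -> 0 < g <= 2 -> 0 <= y ->
  (y + 1) * exp (a * sqrt y) <= 2 / g * exp (a ^ 2 / (2 * g)) * exp (g * y).
Proof.
  intros Ha Hg Hy.
  assert (Hpoly : y + 1 <= 2 / g * exp (g * y / 2)).
  { generalize (exp_ineq1_le (g * y / 2)). intros H.
    apply (Rmult_le_reg_l (g / 2)); [lra|].
    replace (g / 2 * (2 / g * exp (g * y / 2))) with (exp (g * y / 2)) by (field; lra). nra. }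
  assert (Hamgm : a * sqrt y <= g * y / 2 + a ^ 2 / (2 * g)).
  { set (z := sqrt y). replace y with (z * z) by (apply sqrt_sqrt, Hy).
    apply (Rmult_le_reg_l (2 * g)); [lra|].
    replace (2 * g * (g * (z * z) / 2 + a ^ 2 / (2 * g))) with (g * g * (z * z) + a ^ 2)
      by (field; lra).
    generalize (pow2_ge_0 (g * z - a)). nra. }
  apply (Rle_trans _ (2 / g * exp (g * y / 2) * exp (g * y / 2 + a ^ 2 / (2 * g)))).
  { apply Rmult_le_compat; [lra | left; apply exp_pos | exact Hpoly | now apply exp_le_compat]. }
  right. rewrite !Rmult_assoc, <- !exp_plus. f_equal. f_equal. field. lra.
Qed.

(* [sigma sqrt(n / 2)] minimises [e^(r^2 / sigma^2) / r^n]; the shift by [t] keeps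
   [theta <= r] for [theta] in [[0, t]]. *)
Definition cauchy_radius (sigma t : R) (n : nat) : R := sigma * sqrt (INR n / 2) + t.

(* With [g = ln 2 / 2] in [poly_exp_sqrt_le], the subexponential factor costs [2^(n/2)], the
   other half of the [2^n] in the statement coming from Stirling's bound. *)
Definition weight_const (sigma t : R) : R :=
  exp (4 * t + t ^ 2 / sigma ^ 2) * exp 1
  * (2 / (ln 2 / 2) * exp (((4 + 2 * t / sigma ^ 2) * sigma) ^ 2 / (2 * (ln 2 / 2)))).

Lemma ln2_bounds : / 2 < ln 2 <= 1.
Proof. split; [apply ln_lt_2 | generalize (ln_le_sub_1 2); lra]. Qed.

Lemma weight_const_pos (sigma t : R) : 0 < weight_const sigma t.
Proof.
  unfold weight_const. generalize ln2_bounds; intros.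
  repeat (apply Rmult_lt_0_compat || apply Rdiv_lt_0_compat || apply Rinv_0_lt_compat);
    try apply exp_pos; lra.
Qed.

Lemma cauchy_radius_ge (sigma t : R) (n : nat) : 0 < sigma -> t <= cauchy_radius sigma t n.
Proof.
  intros Hs. unfold cauchy_radius. generalize (sqrt_pos (INR n / 2)). nra.
Qed.

Lemma pw_term_nonneg (n : nat) (sigma : R) : 0 <= pw_term n sigma.
Proof. destruct n; simpl; [lra | unfold Rpower; left; apply exp_pos]. Qed.

Lemma scaled_sqrt_pow_pos (sigma : R) (n : nat) : 0 < sigma ->
  0 < (sigma * sqrt (INR n / 2)) ^ n.
Proof.
  intros Hs. destruct n as [|n]; [simpl; lra|]. apply pow_lt, Rmult_lt_0_compat; [lra|].
  apply sqrt_lt_R0. rewrite S_INR. generalize (pos_INR n). lra.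
Qed.

Lemma gauss_weight_radius_le_exp (sigma t : R) (n : nat) : 0 < sigma -> 0 < t ->
  gauss_weight sigma (cauchy_radius sigma t n) / cauchy_radius sigma t n ^ n
  <= exp (4 * t + t ^ 2 / sigma ^ 2) * exp ((4 + 2 * t / sigma ^ 2) * (sigma * sqrt (INR n / 2)))
     * exp (INR n / 2) / (sigma * sqrt (INR n / 2)) ^ n.
Proof.
  intros Hs Ht. set (N := INR n). set (rho := sigma * sqrt (N / 2)).
  assert (Hs2 : 0 < sigma ^ 2) by (apply pow_lt; lra).
  assert (Hrho : 0 <= rho) by (apply Rmult_le_pos; [lra | apply sqrt_pos]).
  assert (Hrhon : 0 < rho ^ n) by exact (scaled_sqrt_pow_pos sigma n Hs).
  assert (Hrho2 : rho ^ 2 = sigma ^ 2 * (N / 2)).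
  { unfold rho. rewrite Rpow_mult_distr. simpl. rewrite !Rmult_1_r, sqrt_sqrt; [lra|].
    generalize (pos_INR n). fold N. lra. }
  unfold gauss_weight, cauchy_radius. fold N rho.
  rewrite <- !exp_plus.
  replace (4 * t + t ^ 2 / sigma ^ 2 + (4 + 2 * t / sigma ^ 2) * rho + N / 2)
    with (3 * (rho + t) + (rho + t + (rho + t) ^ 2 / sigma ^ 2))
    by (replace (N / 2) with (rho ^ 2 / sigma ^ 2) by (rewrite Hrho2; field; lra); field; lra).
  rewrite (exp_plus (3 * (rho + t))). unfold Rdiv at 1 3. apply Rmult_le_compat.
  - apply Rmult_le_pos; [apply pow_le; lra | left; apply exp_pos].
  - left; apply Rinv_0_lt_compat, pow_lt; lra.
  - apply Rmult_le_compat_r; [left; apply exp_pos | apply pow3_1_plus_le_exp; lra].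
  - apply Rinv_le_contravar; [exact Hrhon | apply pow_incr; lra].
Qed.

Lemma gauss_weight_radius_le (sigma t : R) (n : nat) : 0 < sigma -> 0 < t ->
  gauss_weight sigma (cauchy_radius sigma t n) / cauchy_radius sigma t n ^ n
  <= weight_const sigma t * 2 ^ n * pw_term n sigma / INR (fact n).
Proof.
  intros Hs Ht. eapply Rle_trans; [apply gauss_weight_radius_le_exp; assumption|].
  set (N := INR n). set (rho := sigma * sqrt (N / 2)).
  set (a := (4 + 2 * t / sigma ^ 2) * sigma). set (g := ln 2 / 2).
  set (X := exp (4 * t + t ^ 2 / sigma ^ 2)).
  assert (HN : 0 <= N) by apply pos_INR.
  assert (Hts : 0 <= t / sigma ^ 2) by (apply Rdiv_le_0_compat; [lra | apply pow_lt; lra]).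
  assert (Hfact := INR_fact_pos n). assert (HX : 0 < X) by apply exp_pos.
  assert (Hrhon : 0 < rho ^ n) by exact (scaled_sqrt_pow_pos sigma n Hs).
  assert (Hsq : (4 + 2 * t / sigma ^ 2) * rho <= a * sqrt N).
  { unfold a, rho. rewrite Rmult_assoc. apply Rmult_le_compat_l; [lra|].
    apply Rmult_le_compat_l; [lra | apply sqrt_le_1_alt; lra]. }
  assert (Hgrowth : (N + 1) * exp (a * sqrt N) <= 2 / g * exp (a ^ 2 / (2 * g)) * exp (g * N)).
  { apply poly_exp_sqrt_le; [unfold a; nra | unfold g; generalize ln2_bounds; lra | lra]. }
  assert (Hratio := fact_gauss_ratio_le sigma n Hs). fold N rho in Hratio.
  assert (H2n : 2 ^ n = exp (g * N) * exp (N * ln 2 / 2)).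
  { rewrite <- exp_plus, <- (exp_ln (2 ^ n)) by (apply pow_lt; lra).
    rewrite ln_pow by lra. unfold g, N. f_equal. field. }
  apply (Rle_trans _ (X * exp (a * sqrt N)
                      * (exp 1 * (N + 1) * exp (N * ln 2 / 2) * pw_term n sigma) / INR (fact n))).
  { replace (X * exp ((4 + 2 * t / sigma ^ 2) * rho) * exp (N / 2) / rho ^ n)
      with (X * exp ((4 + 2 * t / sigma ^ 2) * rho)
            * (INR (fact n) * exp (N / 2) / rho ^ n) / INR (fact n)) by (field; lra).
    apply (Rmult_le_compat_r (/ INR (fact n))); [left; apply Rinv_0_lt_compat, Hfact|].
    apply Rmult_le_compat;
      [apply Rmult_le_pos; [lra | left; apply exp_pos] | |
       apply Rmult_le_compat_l; [lra | now apply exp_le_compat] | exact Hratio].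
    apply Rdiv_le_0_compat; [apply Rmult_le_pos; [lra | left; apply exp_pos] | exact Hrhon]. }
  unfold weight_const. fold X a g. rewrite H2n.
  replace (X * exp 1 * (2 / g * exp (a ^ 2 / (2 * g))) * (exp (g * N) * exp (N * ln 2 / 2))
           * pw_term n sigma / INR (fact n))
    with (X * exp 1 * (2 / g * exp (a ^ 2 / (2 * g)) * exp (g * N)) * exp (N * ln 2 / 2)
          * pw_term n sigma / INR (fact n)) by (unfold Rdiv; ring).
  replace (X * exp (a * sqrt N) * (exp 1 * (N + 1) * exp (N * ln 2 / 2) * pw_term n sigma)
           / INR (fact n))
    with (X * exp 1 * ((N + 1) * exp (a * sqrt N)) * exp (N * ln 2 / 2)
          * pw_term n sigma / INR (fact n)) by (unfold Rdiv; ring).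
  apply (Rmult_le_compat_r (/ INR (fact n))); [left; apply Rinv_0_lt_compat, Hfact|].
  apply Rmult_le_compat_r; [apply pw_term_nonneg|].
  apply Rmult_le_compat_r; [left; apply exp_pos|].
  apply Rmult_le_compat_l; [apply Rmult_le_pos; [lra | left; apply exp_pos] | exact Hgrowth].
Qed.

Definition expansion_const (sigma t : R) : R :=
  2 * PI * gauss_const sigma * weight_const sigma t.

Lemma expansion_const_pos (sigma t : R) : 0 < sigma -> 0 < expansion_const sigma t.
Proof.
  intros Hs. unfold expansion_const.
  apply Rmult_lt_0_compat; [apply Rmult_lt_0_compat; [generalize PI_RGT_0; lra|] |].
  - exact (gauss_const_pos sigma Hs).
  - exact (weight_const_pos sigma t).
Qed.

Lemma cauchy_estimate_le (sigma t s : R) (n : nat) : 0 < sigma -> 0 < t -> 0 <= s ->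
  2 * gauss_const sigma * (gauss_weight sigma (cauchy_radius sigma t n)
                           / cauchy_radius sigma t n ^ n) * s * PI
  <= expansion_const sigma t * sqrt (INR n + 1) * (2 ^ n * s) * (1 + pw_term n sigma)
     / INR (fact n).
Proof.
  intros Hs Ht Hs0.
  assert (HW := gauss_weight_radius_le sigma t n Hs Ht).
  assert (HK0 := gauss_const_pos sigma Hs).
  assert (Hf := INR_fact_pos n). assert (HPI := PI_RGT_0).
  assert (H2n : 0 < 2 ^ n) by (apply pow_lt; lra).
  assert (Hpw := pw_term_nonneg n sigma).
  assert (Hsq : 1 <= sqrt (INR n + 1)).
  { generalize (sqrt_le_1_alt 1 (INR n + 1) ltac:(generalize (pos_INR n); lra)).
    now rewrite sqrt_1. }
  apply (Rle_trans _ (2 * gauss_const sigma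
                      * (weight_const sigma t * 2 ^ n * pw_term n sigma / INR (fact n)) * s * PI)).
  { apply Rmult_le_compat_r; [lra|]. apply Rmult_le_compat_r; [exact Hs0|].
    apply Rmult_le_compat_l; [lra | exact HW]. }
  unfold expansion_const, Rdiv.
  replace (2 * gauss_const sigma * (weight_const sigma t * 2 ^ n * pw_term n sigma
           * / INR (fact n)) * s * PI)
    with ((2 * PI * gauss_const sigma * weight_const sigma t * (2 ^ n * s) * / INR (fact n))
          * (1 * pw_term n sigma)) by ring.
  replace (2 * PI * gauss_const sigma * weight_const sigma t * sqrt (INR n + 1) * (2 ^ n * s)
           * (1 + pw_term n sigma) * / INR (fact n))
    with ((2 * PI * gauss_const sigma * weight_const sigma t * (2 ^ n * s) * / INR (fact n))
          * (sqrt (INR n + 1) * (1 + pw_term n sigma))) by ring.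
  apply Rmult_le_compat_l; [|apply Rmult_le_compat; lra].
  apply Rmult_le_pos; [|left; apply Rinv_0_lt_compat, Hf].
  apply Rmult_le_pos; [left; exact (expansion_const_pos sigma t Hs) | apply Rmult_le_pos; lra].
Qed.

Definition coef_integrand (l : R -> R) (sigma : R) (n : nat) (u : R) : R :=
  l u * gauss_density sigma u * tilt_coef sigma u n.

Definition taylor_coef (l : R -> R) (sigma : R) (n : nat) : R :=
  RInt_gen (coef_integrand l sigma n) (Rbar_locally m_infty) (Rbar_locally p_infty).

Lemma continuous_sum_f_R0 (F : nat -> R -> R) (n : nat) (x : R) :
  (forall i, continuous (F i) x) -> continuous (fun u => sum_f_R0 (fun i => F i u) n) x.
Proof.
  intros HF. induction n as [|n IH]; simpl; [apply HF|].
  apply (continuous_plus (K := R_AbsRing) (V := R_NormedModule)); [exact IH | apply HF].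
Qed.

Lemma continuous_gauss_density (sigma x : R) : continuous (gauss_density sigma) x.
Proof.
  apply (ex_derive_continuous (gauss_density sigma)). unfold gauss_density. auto_derive. auto.
Qed.

Lemma continuous_tilt_coef (sigma : R) (n : nat) (x : R) :
  continuous (fun u => tilt_coef sigma u n) x.
Proof.
  apply (continuous_minus (K := R_AbsRing) (V := R_NormedModule) _ (fun _ => _));
    [|apply continuous_const].
  apply (continuous_sum_f_R0 (fun k u => exp_coef (shift_lin sigma u) k
                                         * exp_sq_coef (shift_quad sigma) (n - k))).
  intros k. apply (ex_derive_continuous (fun u => exp_coef (shift_lin sigma u) k
                                               * exp_sq_coef (shift_quad sigma) (n - k))).
  unfold exp_coef, shift_lin. auto_derive. auto.
Qed.

Lemma one_lipschitz_continuous (l : R -> R) (x : R) : one_lipschitz l -> continuous l x.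
Proof.
  intros Hl. apply continuity_pt_filterlim. intros eps Heps. exists eps. split; [exact Heps|].
  intros y [_ Hy]. simpl in *. unfold R_dist in *. eapply Rle_lt_trans; [apply Hl | exact Hy].
Qed.

Section SmoothedLossExpansion.

Variables (sigma t : R) (l : R -> R).
Hypothesis sigma_pos : 0 < sigma.
Hypothesis t_pos : 0 < t.
Hypothesis l_lip : one_lipschitz l.
Hypothesis l_0 : l 0 = 0.

Let Rabs_l_le (u : R) : Rabs (l u) <= Rabs u.
Proof. generalize (l_lip u 0). now rewrite l_0, !Rminus_0_r. Qed.

Let radius_pos (n : nat) : 0 < cauchy_radius sigma t n.
Proof. generalize (cauchy_radius_ge sigma t n sigma_pos). lra. Qed.

Lemma continuous_coef_integrand (n : nat) (x : R) : continuous (coef_integrand l sigma n) x.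
Proof.
  apply (continuous_mult (K := R_AbsRing)); [|apply continuous_tilt_coef].
  apply (continuous_mult (K := R_AbsRing));
    [apply one_lipschitz_continuous, l_lip | apply continuous_gauss_density].
Qed.

Lemma coef_integrand_dominated (n : nat) (u : R) :
  Rabs (coef_integrand l sigma n u)
  <= 2 * gauss_const sigma * gauss_weight sigma (cauchy_radius sigma t n)
     * / cauchy_radius sigma t n ^ n / (1 + u ^ 2).
Proof.
  set (r := cauchy_radius sigma t n). assert (Hr : 0 < r) by apply radius_pos.
  apply Rabs_le_of_tilt_majorant;
    [exact sigma_pos | lra | left; apply Rinv_0_lt_compat, pow_lt, Hr |].
  assert (Hg := gauss_density_pos sigma sigma_pos u).
  unfold coef_integrand. rewrite !Rabs_mult, (Rabs_right (gauss_density sigma u)) by lra.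
  replace (Rabs u * gauss_density sigma u * tilt_majorant sigma u r * / r ^ n)
    with (Rabs u * gauss_density sigma u * (tilt_majorant sigma u r / r ^ n))
    by (unfold Rdiv; ring).
  apply Rmult_le_compat; [apply Rmult_le_pos; [apply Rabs_pos | lra] | apply Rabs_pos | |].
  - apply Rmult_le_compat_r; [lra | apply Rabs_l_le].
  - apply Rabs_tilt_coef_le; assumption.
Qed.

Lemma is_RInt_line_taylor_coef (n : nat) :
  is_RInt_line (coef_integrand l sigma n) (taylor_coef l sigma n).
Proof.
  destruct (ex_RInt_line_dominated _ _ (continuous_coef_integrand n)
              (coef_integrand_dominated n)) as [L HL].
  unfold taylor_coef. now rewrite (is_RInt_gen_unique _ _ HL).
Qed.

Lemma Rabs_taylor_coef_le (n : nat) :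
  Rabs (taylor_coef l sigma n)
  <= expansion_const sigma t * sqrt (INR n + 1) * 2 ^ n * (1 + pw_term n sigma)
     / INR (fact n).
Proof.
  eapply Rle_trans; [exact (is_RInt_line_dominated_bound _ _ (coef_integrand_dominated n) _
                             (is_RInt_line_taylor_coef n))|].
  generalize (cauchy_estimate_le sigma t 1 n sigma_pos t_pos ltac:(lra)).
  rewrite !Rmult_1_r. unfold Rdiv. now rewrite !Rmult_assoc.
Qed.

Lemma continuous_shifted_integrand (theta x : R) :
  continuous (fun u => l u * gauss_density sigma (theta - u)) x.
Proof.
  apply (continuous_mult (K := R_AbsRing)); [apply one_lipschitz_continuous, l_lip|].
  apply (continuous_comp (fun u => theta - u) (gauss_density sigma));
    [|apply continuous_gauss_density].
  apply (ex_derive_continuous (fun u => theta - u)). auto_derive. auto.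
Qed.

Lemma is_RInt_line_smoothed_loss (theta : R) : 0 <= theta ->
  is_RInt_line (fun u => l u * gauss_density sigma (theta - u)) (smoothed_loss l sigma theta).
Proof.
  intros Hth.
  assert (Hdom : forall u, Rabs (l u * gauss_density sigma (theta - u))
                           <= 2 * gauss_const sigma * gauss_weight sigma theta * 1 / (1 + u ^ 2)).
  { intros u. apply Rabs_le_of_tilt_majorant; [exact sigma_pos | exact Hth | lra |].
    rewrite Rmult_1_r, Rabs_mult, (Rabs_right (gauss_density sigma (theta - u)))
      by (left; apply gauss_density_pos, sigma_pos).
    rewrite Rmult_assoc.
    apply Rmult_le_compat;
      [apply Rabs_pos | left; apply gauss_density_pos, sigma_pos | apply Rabs_l_le |].
    apply gauss_density_shift_le; assumption. }
  destruct (ex_RInt_line_dominated _ _ (continuous_shifted_integrand theta) Hdom) as [L HL].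
  unfold smoothed_loss.
  rewrite (is_RInt_gen_unique (fun y => l (theta - y) * gauss_density sigma y) L); [exact HL|].
  apply (is_RInt_gen_ext (fun y => l (theta - y) * gauss_density sigma (theta - (theta - y)))).
  - apply filter_forall. intros ab y _. do 2 f_equal. ring.
  - exact (is_RInt_line_reflect (fun u => l u * gauss_density sigma (theta - u)) theta L HL).
Qed.

Let remainder_integrand (theta : R) (m : nat) (u : R) : R :=
  l u * gauss_density sigma (theta - u) - l u * gauss_density sigma (0 - u)
  - exp (- theta) * sum_f_R0 (fun n => theta ^ n * coef_integrand l sigma n u) m.

Lemma remainder_integrand_eq (theta : R) (m : nat) (u : R) :
  remainder_integrand theta m u
  = exp (- theta) * (l u * gauss_density sigma u)
    * (exp (shift_lin sigma u * theta + shift_quad sigma * theta ^ 2) - exp theta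
       - sum_f_R0 (fun n => tilt_coef sigma u n * theta ^ n) m).
Proof.
  unfold remainder_integrand, coef_integrand.
  rewrite !gauss_density_shift by exact sigma_pos.
  replace (shift_lin sigma u * 0 + shift_quad sigma * 0 ^ 2) with 0 by ring.
  rewrite Ropp_0, exp_0.
  replace (sum_f_R0 (fun n => theta ^ n * (l u * gauss_density sigma u * tilt_coef sigma u n)) m)
    with (l u * gauss_density sigma u * sum_f_R0 (fun n => tilt_coef sigma u n * theta ^ n) m)
    by (rewrite scal_sum; apply sum_eq; intros; ring).
  assert (Hinv : exp (- theta) * exp theta = 1)
    by (rewrite <- exp_plus, Rplus_opp_l; apply exp_0).
  replace (l u * (1 * gauss_density sigma u * 1))
    with (l u * gauss_density sigma u * (exp (- theta) * exp theta)) by (rewrite Hinv; ring).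
  ring.
Qed.

Lemma remainder_integrand_dominated (theta : R) (m : nat) : 0 <= theta <= t -> forall u,
  Rabs (remainder_integrand theta m u)
  <= 2 * gauss_const sigma * gauss_weight sigma (cauchy_radius sigma t (S m))
     * (theta / cauchy_radius sigma t (S m)) ^ S m / (1 + u ^ 2).
Proof.
  intros Hth u. set (r := cauchy_radius sigma t (S m)).
  assert (Hr : 0 < r) by apply radius_pos.
  assert (Htr : theta <= r)
    by (generalize (cauchy_radius_ge sigma t (S m) sigma_pos); unfold r; lra).
  apply Rabs_le_of_tilt_majorant;
    [exact sigma_pos | lra | apply pow_le, Rdiv_le_0_compat; lra |].
  rewrite remainder_integrand_eq, !Rabs_mult, (Rabs_right (exp (- theta))),
    (Rabs_right (gauss_density sigma u))
    by (left; apply exp_pos || apply gauss_density_pos, sigma_pos).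
  assert (Hexp : exp (- theta) <= 1) by (rewrite <- exp_0; apply exp_le_compat; lra).
  assert (Hrem := tilt_remainder_le sigma u r theta m Hr
                    ltac:(rewrite (Rabs_right theta); lra)).
  rewrite (Rabs_right theta) in Hrem by lra.
  assert (Hg := gauss_density_pos sigma sigma_pos u).
  apply (Rle_trans _ (1 * (Rabs u * gauss_density sigma u)
                      * ((theta / r) ^ S m * tilt_majorant sigma u r))); [|right; ring].
  apply Rmult_le_compat; [| apply Rabs_pos | | exact Hrem].
  - apply Rmult_le_pos; [left; apply exp_pos | apply Rmult_le_pos; [apply Rabs_pos | lra]].
  - apply Rmult_le_compat; [left; apply exp_pos | apply Rmult_le_pos; [apply Rabs_pos | lra] |
      exact Hexp | apply Rmult_le_compat_r; [lra | apply Rabs_l_le]].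
Qed.

Lemma is_RInt_line_remainder (theta : R) (m : nat) : 0 <= theta ->
  is_RInt_line (remainder_integrand theta m)
    (smoothed_loss l sigma theta - smoothed_loss l sigma 0
     - exp (- theta) * sum_f_R0 (fun n => theta ^ n * taylor_coef l sigma n) m).
Proof.
  intros Hth.
  apply (is_RInt_gen_minus _ _ _ _
           (is_RInt_gen_minus _ _ _ _ (is_RInt_line_smoothed_loss theta Hth)
              (is_RInt_line_smoothed_loss 0 (Rle_refl 0)))).
  apply (is_RInt_gen_scal (V := R_NormedModule) _ (exp (- theta))).
  apply (is_RInt_line_sum (fun n u => theta ^ n * coef_integrand l sigma n u)).
  intros n. apply (is_RInt_gen_scal (V := R_NormedModule) _ (theta ^ n)), is_RInt_line_taylor_coef.
Qed.

Lemma smoothed_loss_remainder_le (theta : R) (k : nat) : 0 <= theta <= t -> (1 <= k)%nat ->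
  Rabs (smoothed_loss l sigma theta - smoothed_loss l sigma 0
        - exp (- theta) * sum_f_R0 (fun x => taylor_coef l sigma x * theta ^ x) (k - 1))
  <= expansion_const sigma t * sqrt (INR k + 1) * (2 * t) ^ k * (1 + pw_term k sigma)
     / INR (fact k).
Proof.
  intros Hth Hk. destruct k as [|m]; [lia|]. replace (S m - 1)%nat with m by lia.
  set (r := cauchy_radius sigma t (S m)).
  assert (Hr : 0 < r) by apply radius_pos.
  rewrite (sum_eq _ (fun n => theta ^ n * taylor_coef l sigma n)) by (intros; ring).
  eapply Rle_trans; [exact (is_RInt_line_dominated_bound _ _
    (remainder_integrand_dominated theta m Hth) _ (is_RInt_line_remainder theta m (proj1 Hth)))|].
  eapply Rle_trans; [|rewrite Rpow_mult_distr; exact (cauchy_estimate_le sigma t (t ^ S m) (S m)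
                          sigma_pos t_pos (pow_le t (S m) (Rlt_le _ _ t_pos)))].
  fold r. apply Rmult_le_compat_r; [generalize PI_RGT_0; lra|].
  unfold Rdiv. rewrite Rpow_mult_distr, pow_inv.
  replace (2 * gauss_const sigma * gauss_weight sigma r * (theta ^ S m * / r ^ S m))
    with (2 * gauss_const sigma * (gauss_weight sigma r * / r ^ S m) * theta ^ S m) by ring.
  apply Rmult_le_compat_l; [|apply pow_incr; lra].
  assert (HK0 := gauss_const_pos sigma sigma_pos).
  assert (HW : 0 <= gauss_weight sigma r).
  { unfold gauss_weight. apply Rmult_le_pos; [apply pow_le; lra | left; apply exp_pos]. }
  apply Rmult_le_pos; [lra | apply Rmult_le_pos; [exact HW|]].
  left; apply Rinv_0_lt_compat, pow_lt, Hr.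
Qed.

End SmoothedLossExpansion.

Theorem lemma1 (theta_star sigma : R) (Hts : 0 < theta_star) (Hsig : 0 < sigma) :
  exists C : R, 0 < C /\
  forall l : R -> R, one_lipschitz l -> l 0 = 0 ->
  forall k : nat, (1 <= k)%nat ->
  exists c : nat -> R,
    (forall x : nat, (x <= k - 1)%nat ->
       Rabs (c x) <= C * sqrt (INR x + 1) * 2 ^ x * (1 + pw_term x sigma) / INR (Factorial.fact x)) /\
    (forall theta : R, 0 <= theta <= theta_star ->
       Rabs (smoothed_loss l sigma theta - smoothed_loss l sigma 0
             - exp (- theta) * sum_f_R0 (fun x => c x * theta ^ x) (k - 1))
       <= C * sqrt (INR k + 1) * (2 * theta_star) ^ k * (1 + pw_term k sigma) / INR (Factorial.fact k)).
Proof.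
  exists (expansion_const sigma theta_star).
  split; [now apply expansion_const_pos|].
  intros l Hl Hl0 k Hk. exists (taylor_coef l sigma). split.
  - intros x _. now apply Rabs_taylor_coef_le.
  - intros theta Htheta. now apply smoothed_loss_remainder_le.
Qed.
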